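(* Fix $W>0$, $N_0>0$, dual variables $\mu\ge0$, $\lambda\ge0$, and complex numbers $H_{\rm SD},H_{\rm SR},H_{\rm RD}$. Consider the problem $$\max_{P\ge0,\ \bar\Xi\ge0}\ \frac{1}{2W}\log_2\left(1+\frac{\left(|H_{\rm SD}|+|H_{\rm RD}H_{\rm SR}|\bar\Xi\right)^2P}{\left(|H_{\rm RD}|^2\bar\Xi^2+1\right)N_0}\right)-\mu P-\lambda\bar\Xi^2|H_{\rm SR}|^2P.$$ Define $$\beta(\bar\Xi)=\frac{\left(|H_{\rm SD}|+|H_{\rm RD}H_{\rm SR}|\bar\Xi\right)^2}{\left(\mu+\lambda\bar\Xi^2|H_{\rm SR}|^2\right)\left(|H_{\rm RD}|^2\bar\Xi^2+1\right)N_0},$$ $$\chi(\bar\Xi)=\left(\frac{1}{(2\ln2)W(\mu+\lambda\bar\Xi^2|H_{\rm SR}|^2)}-\frac{\left(|H_{\rm RD}|^2\bar\Xi^2+1\right)N_0}{\left(|H_{\rm SD}|+|H_{\rm RD}H_{\rm SR}|\bar\Xi\right)^2}\right)^+,$$ where $x^+=\max(x,0)$. Then an optimal solution $(P^\star,\bar\Xi^\star)$ of the problem is given by $$\bar\Xi^\star=\begin{cases}\arg\max_{\bar\Xi\ge0}\beta(\bar\Xi), & \text{if } \max_{\bar\Xi\ge0}\beta(\bar\Xi)>(2\ln2)W,\\ 0, & \text{otherwise},\end{cases}\qquad P^\star=\chi(\bar\Xi^\star).$$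
   Context: This is the per-frequency subproblem arising from the Lagrangian of the rate maximization for a full-duplex filter-and-forward relay channel, where $P$ is the source power spectral density at a given frequency, $\bar\Xi$ is the amplitude of the relay's effective filter gain at that frequency, $H_{\rm SD},H_{\rm SR},H_{\rm RD}$ are the source–destination, source–relay and relay–destination channel frequency responses at that frequency, and $\mu,\lambda$ are the Lagrange multipliers of the source and relay power constraints. *)

From HB Require Import structures.
From mathcomp Require Import all_boot all_order all_algebra.
From mathcomp Require Import reals exp.
From mathcomp Require Import complex.
Set Implicit Arguments. Unset Strict Implicit. Unset Printing Implicit Defensive.
Import Order.TTheory GRing.Theory Num.Theory.
Local Open Scope ring_scope.
Local Open Scope complex_scope.

Section FD.
Variable R : realType.

Definition log2 (x : R) : R := ln x / ln 2.

Definition cabs (z : R[i]) : R := ComplexField.Normc.normc z.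

Definition fd_num (Hsd Hsr Hrd : R[i]) (Xi : R) : R :=
  (cabs Hsd + cabs (Hrd * Hsr) * Xi) ^+ 2.

Definition fd_den (N0 : R) (Hrd : R[i]) (Xi : R) : R :=
  (cabs Hrd ^+ 2 * Xi ^+ 2 + 1) * N0.

Definition fd_price (mu lambda : R) (Hsr : R[i]) (Xi : R) : R :=
  mu + lambda * Xi ^+ 2 * cabs Hsr ^+ 2.

Definition fd_obj (W N0 mu lambda : R) (Hsd Hsr Hrd : R[i]) (P Xi : R) : R :=
  (2 * W)^-1 * log2 (1 + fd_num Hsd Hsr Hrd Xi * P / fd_den N0 Hrd Xi)
  - mu * P - lambda * Xi ^+ 2 * cabs Hsr ^+ 2 * P.

Definition fd_beta (N0 mu lambda : R) (Hsd Hsr Hrd : R[i]) (Xi : R) : R :=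
  fd_num Hsd Hsr Hrd Xi /
  (fd_price mu lambda Hsr Xi * fd_den N0 Hrd Xi).

(* chi(Xi) = ( 1/((2 ln 2) W c(Xi)) - b(Xi)/a(Xi) )^+ ; when a(Xi) = 0 the
   subtracted term is +oo and the positive part is 0 (made explicit). *)
Definition fd_chi (W N0 mu lambda : R) (Hsd Hsr Hrd : R[i]) (Xi : R) : R :=
  if fd_num Hsd Hsr Hrd Xi == 0 then 0 else
  Num.max ((2 * ln 2 * W * fd_price mu lambda Hsr Xi)^-1
           - fd_den N0 Hrd Xi / fd_num Hsd Hsr Hrd Xi) 0.

Definition fd_optimal (W N0 mu lambda : R) (Hsd Hsr Hrd : R[i]) (P Xi : R) :=
  [/\ 0 <= P, 0 <= Xi &
      forall P' Xi', 0 <= P' -> 0 <= Xi' ->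
        fd_obj W N0 mu lambda Hsd Hsr Hrd P' Xi'
        <= fd_obj W N0 mu lambda Hsd Hsr Hrd P Xi].

End FD.

From HB Require Import structures.
From mathcomp Require Import all_boot all_order all_algebra.
From mathcomp Require Import reals exp.
From mathcomp Require Import complex.
From mathcomp Require Import ring lra.
Set Implicit Arguments. Unset Strict Implicit. Unset Printing Implicit Defensive.
Import Order.TTheory GRing.Theory Num.Theory.
Local Open Scope ring_scope.

(* For fixed Xi, with k = (2 ln 2) W, s = beta(Xi)/k and Q = k c(Xi) P, the
   objective is (ln (1 + s Q) - Q) / k.  By ln x <= x - 1 its supremum over
   Q >= 0 is g(max s 1) / k with g y = ln y + 1/y - 1, attained at
   Q = (1 - 1/s)^+, i.e. at P = chi(Xi).  Since g is nondecreasing on [1, +oo),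
   the optimal value over both variables is reached where beta is largest
   (so the hypothesis max beta > k is not needed in the first case), and it
   is 0, reached at Xi = 0, P = 0, when beta <= k everywhere. *)

Section LogGain.
Variable R : realType.
Implicit Types s y z Q : R.

Definition log_gain y : R := ln y + y^-1 - 1.

Lemma ln_le_subr1 y : 0 < y -> ln y <= y - 1.
Proof. by move=> y0; have := expR_ge1Dx (ln y); rewrite lnK ?posrE //; lra. Qed.

Lemma log_gain1 : log_gain 1 = 0.
Proof. by rewrite /log_gain ln1 invr1 add0r subrr. Qed.

Lemma log_gain_le y z : 1 <= y -> y <= z -> log_gain y <= log_gain z.
Proof.
move=> y1 yz; have y0 : 0 < y by lra.
have z0 : 0 < z by lra.
have ln_yz : ln y - ln z <= y / z - 1.
  by rewrite -ln_div ?posrE // ln_le_subr1 // divr_gt0.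
have inv_diff : y^-1 - z^-1 = (z - y) * z^-1 * y^-1.
  by field; rewrite !gt_eqF.
have ratio_diff : 1 - y / z = (z - y) * z^-1 by field; rewrite gt_eqF.
have : (z - y) * z^-1 * y^-1 <= (z - y) * z^-1.
  rewrite -[leRHS]mulr1 ler_wpM2l ?invf_le1 //.
  by rewrite mulr_ge0 ?invr_ge0 ?subr_ge0 // ltW.
rewrite /log_gain; lra.
Qed.

Lemma ln1D_sub_le s Q : 0 <= s -> 0 <= Q -> ln (1 + s * Q) - Q <= log_gain (Num.max s 1).
Proof.
move=> s0 Q0; set y := Num.max s 1.
have y1 : 1 <= y by rewrite le_max lexx orbT.
have sy : s <= y by rewrite le_max lexx.
have y0 : 0 < y by lra.
have sQ0 : 0 < 1 + s * Q by have := mulr_ge0 s0 Q0; lra.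
have ln_ratio : ln (1 + s * Q) - ln y <= (1 + s * Q) / y - 1.
  by rewrite -ln_div ?posrE // ln_le_subr1 // divr_gt0.
have ratioE : (1 + s * Q) / y = y^-1 + s / y * Q by field; rewrite gt_eqF.
have : s / y * Q <= Q.
  by rewrite -[leRHS]mul1r ler_wpM2r // ler_pdivrMr // mul1r.
rewrite /log_gain; lra.
Qed.

Lemma ln1D_sub_max s : 0 < s ->
  ln (1 + s * Num.max (1 - s^-1) 0) - Num.max (1 - s^-1) 0 = log_gain (Num.max s 1).
Proof.
move=> s0; have [s1|s1] := lerP s 1.
  rewrite log_gain1 (max_idPr _) ?mulr0 ?addr0 ?ln1 ?subrr //.
  by rewrite subr_le0 invf_ge1.
rewrite (max_idPl _); last by rewrite subr_ge0 invf_le1 // ltW.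
by rewrite mulrBr mulr1 mulfV ?gt_eqF // addrCA subrr addr0 opprB addrA.
Qed.

End LogGain.

Section PerFrequency.
Variables (R : realType) (W N0 mu lambda : R) (Hsd Hsr Hrd : R[i]).
Hypotheses (W_gt0 : 0 < W) (N0_gt0 : 0 < N0) (mu_gt0 : 0 < mu) (lambda_ge0 : 0 <= lambda).

Local Notation k := (2 * ln 2 * W).
Local Notation num := (fd_num Hsd Hsr Hrd).
Local Notation den := (fd_den N0 Hrd).
Local Notation price := (fd_price mu lambda Hsr).
Local Notation beta := (fd_beta N0 mu lambda Hsd Hsr Hrd).
Local Notation obj := (fd_obj W N0 mu lambda Hsd Hsr Hrd).
Local Notation chi := (fd_chi W N0 mu lambda Hsd Hsr Hrd).

Lemma ln2_gt0 : 0 < ln (2 : R).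
Proof. by rewrite ln_gt0 //; lra. Qed.

Lemma fd_k_gt0 : 0 < k.
Proof. by rewrite !mulr_gt0 // ln2_gt0. Qed.

Lemma fd_num_ge0 Xi : 0 <= num Xi.
Proof. exact: sqr_ge0. Qed.

Lemma fd_den_gt0 Xi : 0 < den Xi.
Proof. by rewrite mulr_gt0 // ltr_pwDr // mulr_ge0 ?sqr_ge0. Qed.

Lemma fd_price_gt0 Xi : 0 < price Xi.
Proof. by apply: ltr_wpDr => //; rewrite mulr_ge0 ?sqr_ge0 // mulr_ge0 ?sqr_ge0. Qed.

Definition fd_value Xi : R := log_gain (Num.max (beta Xi / k) 1) / k.

Lemma fd_objE P Xi :
  obj P Xi = (ln (1 + beta Xi / k * (k * price Xi * P)) - k * price Xi * P) / k.
Proof.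
have den0 := fd_den_gt0 Xi; have price0 := fd_price_gt0 Xi.
have -> : beta Xi / k * (k * price Xi * P) = num Xi * P / den Xi.
  by rewrite /fd_beta; field; rewrite !lt0r_neq0 ?ln2_gt0.
move: price0; rewrite /fd_obj /log2 /fd_price => price0.
by field; rewrite !lt0r_neq0 ?ln2_gt0.
Qed.

Lemma fd_beta_ge0 Xi : 0 <= beta Xi.
Proof. by rewrite divr_ge0 ?fd_num_ge0 // ltW // mulr_gt0 ?fd_price_gt0 ?fd_den_gt0. Qed.

Lemma fd_obj_le_value P Xi : 0 <= P -> obj P Xi <= fd_value Xi.
Proof.
move=> P0; have k0 := fd_k_gt0.
rewrite fd_objE /fd_value ler_pM2r ?invr_gt0 // ln1D_sub_le //.
  by rewrite divr_ge0 ?fd_beta_ge0 ?ltW.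
by rewrite mulr_ge0 // ltW // mulr_gt0 ?fd_price_gt0.
Qed.

(* At P = chi Xi the normalised power k c(Xi) P equals (1 - k / beta(Xi))^+. *)
Lemma fd_obj_chi Xi : obj (chi Xi) Xi = fd_value Xi.
Proof.
rewrite fd_objE /fd_value; congr (_ / k).
have k0 := fd_k_gt0; have den0 := fd_den_gt0 Xi; have price0 := fd_price_gt0 Xi.
rewrite /fd_chi; have [num0|num_neq0] := eqVneq (num Xi) 0.
  by rewrite /fd_beta num0 !(mul0r, mulr0) addr0 ln1 subr0 max_r ?ler01 // log_gain1.
have num0 : 0 < num Xi by rewrite lt_def num_neq0 fd_num_ge0.
have beta0 : 0 < beta Xi / k by rewrite !divr_gt0 // mulr_gt0.
have -> : k * price Xi * Num.max ((k * price Xi)^-1 - den Xi / num Xi) 0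
          = Num.max (1 - (beta Xi / k)^-1) 0.
  rewrite (maxr_pMr _ _ (ltW (mulr_gt0 k0 price0))) mulr0; congr (Num.max _ 0).
  rewrite /fd_beta; field.
  by rewrite !lt0r_neq0 ?ln2_gt0.
exact: ln1D_sub_max.
Qed.

Lemma fd_chi_ge0 Xi : 0 <= chi Xi.
Proof. by rewrite /chi /fd_chi; case: ifP => // _; rewrite le_max lexx orbT. Qed.

Lemma fd_value_le Xi Xs :
  Num.max (beta Xi / k) 1 <= Num.max (beta Xs / k) 1 -> fd_value Xi <= fd_value Xs.
Proof.
move=> le_gain; rewrite ler_pM2r ?invr_gt0 ?fd_k_gt0 //.
by apply: log_gain_le le_gain; rewrite le_max lexx orbT.
Qed.

Lemma fd_obj_le_chi P Xi Xs : 0 <= P ->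
  Num.max (beta Xi / k) 1 <= Num.max (beta Xs / k) 1 -> obj P Xi <= obj (chi Xs) Xs.
Proof.
by move=> P0 le_gain; rewrite fd_obj_chi (le_trans (fd_obj_le_value _ P0)) ?fd_value_le.
Qed.

End PerFrequency.

Theorem mainTheorem4 (R : realType) (W N0 mu lambda : R) (Hsd Hsr Hrd : R[i]) :
  0 < W -> 0 < N0 -> 0 < mu -> 0 <= lambda ->
  (* case max beta > (2 ln 2) W : Xi* is an arg max of beta over Xi >= 0 *)
  (forall Xs : R, 0 <= Xs ->
     (forall Xi : R, 0 <= Xi ->
        fd_beta N0 mu lambda Hsd Hsr Hrd Xi <= fd_beta N0 mu lambda Hsd Hsr Hrd Xs) ->
     fd_beta N0 mu lambda Hsd Hsr Hrd Xs > 2 * ln 2 * W ->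
     fd_optimal W N0 mu lambda Hsd Hsr Hrd
       (fd_chi W N0 mu lambda Hsd Hsr Hrd Xs) Xs) /\
  (* otherwise (beta <= (2 ln 2) W on Xi >= 0) : Xi* = 0 *)
  ((forall Xi : R, 0 <= Xi -> fd_beta N0 mu lambda Hsd Hsr Hrd Xi <= 2 * ln 2 * W) ->
     fd_optimal W N0 mu lambda Hsd Hsr Hrd
       (fd_chi W N0 mu lambda Hsd Hsr Hrd 0) 0).
Proof.
move=> W0 N00 mu0 la0; have k0 : 0 < 2 * ln 2 * W by exact: fd_k_gt0.
split=> [Xs Xs0 beta_max _ | beta_le].
  split=> [||P Xi P0 Xi0]; rewrite ?fd_chi_ge0 //.
  by rewrite fd_obj_le_chi // le_max2 // ler_pM2r ?invr_gt0 // beta_max.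
split=> [||P Xi P0 Xi0]; rewrite ?fd_chi_ge0 //.
have gain1 : Num.max (fd_beta N0 mu lambda Hsd Hsr Hrd Xi / (2 * ln 2 * W)) 1 = 1.
  by rewrite max_r // ler_pdivrMr // mul1r beta_le.
by rewrite fd_obj_le_chi // gain1 le_max lexx orbT.
Qed.
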